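(* Let $x>0$ and $v\ge0$. Then $\delta(x,v)\ge h(x,v)$, where $$h(x,v)=\begin{cases}\dfrac{12x}{\pi^2(v+\sqrt v+1)}, & 0<x\le\frac{\pi^3}{12}(v+\sqrt v+1),\\[2mm] 2\pi-\Big[\dfrac{\pi^8(v+\sqrt v+1)}{12x}\Big]^{1/5}, & \frac{\pi^3}{12}(v+\sqrt v+1)\le x<\infty.\end{cases}$$
   Context: For $v\ge0$ and $0<|\delta|<2\pi$ let $f(v,\delta)=\frac{(v+1)(\delta-\sin\delta)+2\sqrt v(2\sin\frac\delta2-\delta\cos\frac\delta2)}{2\sin^2\frac\delta2}$ (nonnegative square root), and $f(v,0)=0$. For $x\in\mathbb{R}$, $v\ge0$, $\delta(x,v)$ denotes the unique $\delta\in(-2\pi,2\pi)$ with $f(v,\delta)=x$. *)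

From Stdlib Require Import Reals Lra ClassicalEpsilon.
Open Scope R_scope.

Definition f (v d : R) : R :=
  if Req_EM_T d 0 then 0
  else ((v + 1) * (d - sin d)
        + 2 * sqrt v * (2 * sin (d / 2) - d * cos (d / 2)))
       / (2 * (sin (d / 2)) ^ 2).

(* delta(x,v): the (unique) d in (-2pi,2pi) with f(v,d) = x, chosen by
   Hilbert's epsilon; when such a d exists, delta x v is one. *)
Definition delta (x v : R) : R :=
  epsilon (inhabits 0) (fun d => -2 * PI < d < 2 * PI /\ f v d = x).

Definition h (x v : R) : R :=
  let s := v + sqrt v + 1 in
  if Rle_dec x (PI ^ 3 / 12 * s) then 12 * x / (PI ^ 2 * s)
  else 2 * PI - Rpower (PI ^ 8 * s / (12 * x)) (1 / 5).

From Pilot Require Import Defs.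
From Stdlib Require Import Reals Lra Psatz ClassicalEpsilon.
From Stdlib Require Ranalysis5.
From Coquelicot Require Import Coquelicot.
(* Coquelicot also exports an [f]; re-import the one of the paper. *)
Import Defs.
Open Scope R_scope.

(* Since [f v (delta x v) = x], it suffices to show [f v d < x] whenever [d < h x v].
   With [s = v + sqrt v + 1] this follows from three upper bounds:
   [f v d <= 0] on (-2PI, 0], [f v d <= PI^2 s d / 12] on (0, PI] and
   [f v d <= PI^8 s / (12 (2PI - d)^5)] on (PI, 2PI).  The numerator of [f] is
   [(v + 1) A(d) + sqrt v B(d)], so each bound follows from one estimate for [A] and one
   for [B]; these are trigonometric inequalities proved from truncated Taylor expansions
   of [sin] and [cos] together with [3.13 <= PI <= 3.15].  That [delta x v] is a genuine
   solution follows from the intermediate value theorem: [f v] is continuous on (0, 2PI),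
   small near 0 and unbounded near 2PI. *)

Lemma sin_lb_eq (a : R) : sin_lb a = a - a^3/6 + a^5/120 - a^7/5040.
Proof. unfold sin_lb, sin_approx, sin_term; simpl; field. Qed.

Lemma sin_approx_2_eq (a : R) : sin_approx a 2 = a - a^3/6 + a^5/120.
Proof. unfold sin_approx, sin_term; simpl; field. Qed.

Lemma cos_lb_eq (a : R) : cos_lb a = 1 - a^2/2 + a^4/24 - a^6/720.
Proof. unfold cos_lb, cos_approx, cos_term; simpl; field. Qed.

Lemma cos_ub_eq (a : R) : cos_ub a = 1 - a^2/2 + a^4/24 - a^6/720 + a^8/40320.
Proof.
  unfold cos_ub, cos_approx, cos_term; cbn [sum_f_R0 Nat.mul Nat.add].
  rewrite !fact_simpl, !mult_INR; simpl INR; simpl pow; field.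
Qed.

Lemma PI_lower_bound : 313/100 <= PI.
Proof.
  destruct (Rle_lt_dec (313/100) PI) as [H | H]; [exact H | exfalso].
  pose proof PI_RGT_0.
  pose proof (proj1 (COS (PI/2) ltac:(lra) ltac:(lra))) as Hcos.
  rewrite cos_PI2, cos_lb_eq in Hcos.
  assert (Ha : 0 < PI/2 < 313/200) by lra.
  revert Hcos Ha; generalize (PI/2); intros a Hcos Ha.
  assert (Hsq : 0 <= a^2 <= (313/200)^2) by (split; nra).
  replace (a^4) with ((a^2)^2) in Hcos by ring.
  replace (a^6) with ((a^2)^3) in Hcos by ring.
  revert Hcos Hsq; generalize (a^2); intros s Hcos Hs; nra.
Qed.

Lemma PI_upper_bound : PI <= 315/100.
Proof.
  destruct (Rle_lt_dec PI (315/100)) as [H | H]; [exact H | exfalso].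
  pose proof PI_RGT_0; pose proof PI_4.
  pose proof (proj2 (COS (PI/2) ltac:(lra) ltac:(lra))) as Hcos.
  rewrite cos_PI2, cos_ub_eq in Hcos.
  assert (Ha : 315/200 < PI/2 <= 2) by lra.
  revert Hcos Ha; generalize (PI/2); intros a Hcos Ha.
  assert (Hsq : (315/200)^2 <= a^2 <= 4) by (split; nra).
  replace (a^4) with ((a^2)^2) in Hcos by ring.
  replace (a^6) with ((a^2)^3) in Hcos by ring.
  replace (a^8) with ((a^2)^4) in Hcos by ring.
  revert Hcos Hsq; generalize (a^2); intros s Hcos Hs; nra.
Qed.

Lemma PI_sqr_lower_bound : 979/100 <= PI^2.
Proof. pose proof PI_lower_bound; nra. Qed.

Lemma PI_pow8_lower_bound : 9200 <= PI^8.
Proof.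
  pose proof PI_lower_bound.
  apply Rle_trans with ((313/100)^8); [lra | apply pow_incr; lra].
Qed.

Lemma sin_le_x (x : R) : 0 <= x -> sin x <= x.
Proof.
  intros [Hx | <-]; [now apply Rlt_le, sin_lt_x | rewrite sin_0; lra].
Qed.

Lemma sin_ge_cubic (t : R) : 0 <= t <= PI/2 -> t - t^3/6 <= sin t.
Proof.
  intros Ht; pose proof PI_upper_bound; pose proof PI_RGT_0.
  pose proof (proj1 (SIN t ltac:(lra) ltac:(lra))) as Hsin; rewrite sin_lb_eq in Hsin.
  assert (t^2 <= 2481/1000) by nra.
  assert (0 <= t^5 * (1/120 - t^2/5040)) by (apply Rmult_le_pos; [apply pow_le |]; lra).
  nra.
Qed.

Lemma PI_sqr_mul_sin_sqr_ge (t : R) : 0 <= t <= PI/2 ->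
  979/100 * t^3 * (1 - t^2/6)^2 <= PI^2 * t * sin t ^ 2.
Proof.
  intros Ht; pose proof PI_upper_bound; pose proof PI_sqr_lower_bound.
  pose proof (sin_ge_cubic t Ht).
  assert (0 <= t - t^3/6) by nra.
  assert ((t - t^3/6)^2 <= sin t ^ 2) by (apply pow_incr; lra).
  replace (979/100 * t^3 * (1 - t^2/6)^2) with (979/100 * t * (t - t^3/6)^2) by field.
  apply Rmult_le_compat; try nra; apply Rmult_le_compat_r; lra.
Qed.

Lemma sub_sin_double_le_linear (t : R) : 0 < t <= PI/2 ->
  3 * (2*t - sin (2*t)) <= PI^2 * t * sin t ^ 2.
Proof.
  intros Ht; pose proof PI_upper_bound; pose proof PI_RGT_0.
  pose proof (proj1 (SIN (2*t) ltac:(lra) ltac:(lra))) as Hsin; rewrite sin_lb_eq in Hsin.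
  assert (Hpoly : forall s, 0 <= s <= 2481/1000 ->
    3 * (4/3 - 4*s/15 + 128*s^2/5040) <= 979/100 * (1 - s/6)^2) by (intros; nra).
  assert (Hs : 0 <= t^2 <= 2481/1000) by (split; nra).
  apply Rle_trans with (t^3 * (979/100 * (1 - t^2/6)^2)).
  - apply Rle_trans with (t^3 * (3 * (4/3 - 4*t^2/15 + 128*(t^2)^2/5040))).
    + replace (t^3 * (3 * (4/3 - 4*t^2/15 + 128*(t^2)^2/5040))) with
        (3 * (2*t - ((2*t) - (2*t)^3/6 + (2*t)^5/120 - (2*t)^7/5040))) by field.
      lra.
    + apply Rmult_le_compat_l; [apply pow_le; lra | now apply Hpoly].
  - replace (t^3 * (979/100 * (1 - t^2/6)^2)) with (979/100 * t^3 * (1 - t^2/6)^2) by ring.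
    apply PI_sqr_mul_sin_sqr_ge; lra.
Qed.

Lemma sin_sub_mul_cos_le_linear (t : R) : 0 < t <= PI/2 ->
  12 * (sin t - t * cos t) <= PI^2 * t * sin t ^ 2.
Proof.
  intros Ht; pose proof PI_upper_bound; pose proof PI_RGT_0.
  pose proof (proj2 (sin_bound t 0 ltac:(lra) ltac:(lra))) as Hsin.
  rewrite sin_approx_2_eq in Hsin.
  pose proof (proj1 (COS t ltac:(lra) ltac:(lra))) as Hcos; rewrite cos_lb_eq in Hcos.
  assert (Hpoly : forall s, 0 <= s <= 2481/1000 ->
    12 * (1/3 - s/30 + s^2/720) <= 979/100 * (1 - s/6)^2) by (intros; nra).
  assert (Hs : 0 <= t^2 <= 2481/1000) by (split; nra).
  apply Rle_trans with (t^3 * (979/100 * (1 - t^2/6)^2)).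
  - apply Rle_trans with (t^3 * (12 * (1/3 - t^2/30 + (t^2)^2/720))).
    + replace (t^3 * (12 * (1/3 - t^2/30 + (t^2)^2/720))) with
        (12 * ((t - t^3/6 + t^5/120) - t * (1 - t^2/2 + t^4/24 - t^6/720))) by field.
      assert (t * (1 - t^2/2 + t^4/24 - t^6/720) <= t * cos t)
        by (apply Rmult_le_compat_l; lra).
      lra.
    + apply Rmult_le_compat_l; [apply pow_le; lra | now apply Hpoly].
  - replace (t^3 * (979/100 * (1 - t^2/6)^2)) with (979/100 * t^3 * (1 - t^2/6)^2) by ring.
    apply PI_sqr_mul_sin_sqr_ge; lra.
Qed.

Lemma mul_cos_le_sin (t : R) : 0 < t < PI -> t * cos t <= sin t.
Proof.
  intros Ht; pose proof PI_upper_bound.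
  destruct (Rle_lt_dec t (PI/2)) as [Hle | Hgt].
  - pose proof (proj1 (SIN t ltac:(lra) ltac:(lra))) as Hsin; rewrite sin_lb_eq in Hsin.
    pose proof (proj2 (COS t ltac:(lra) ltac:(lra))) as Hcos; rewrite cos_ub_eq in Hcos.
    assert (Hs : 0 <= t^2 <= 2481/1000) by (split; nra).
    assert (Hpoly : 0 <= 1/3 - t^2/30 + (t^2)^2 * (1/720 - 1/5040) - (t^2)^3/40320) by nra.
    assert (t * cos t <= t * (1 - t^2/2 + t^4/24 - t^6/720 + t^8/40320))
      by (apply Rmult_le_compat_l; lra).
    assert (Hdiff : 0 <= (t - t^3/6 + t^5/120 - t^7/5040)
                         - t * (1 - t^2/2 + t^4/24 - t^6/720 + t^8/40320)).
    { replace ((t - t^3/6 + t^5/120 - t^7/5040)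
               - t * (1 - t^2/2 + t^4/24 - t^6/720 + t^8/40320))
        with (t^3 * (1/3 - t^2/30 + (t^2)^2 * (1/720 - 1/5040) - (t^2)^3/40320)) by field.
      apply Rmult_le_pos; [apply pow_le; lra | exact Hpoly]. }
    lra.
  - pose proof (cos_le_0 t ltac:(lra) ltac:(lra)).
    pose proof (sin_ge_0 t ltac:(lra) ltac:(lra)).
    nra.
Qed.

Lemma sub_sin_double_le_pole (w : R) : 0 < w < PI/2 ->
  192 * (2*PI - 2*w + sin (2*w)) * w^5 <= PI^8 * sin w ^ 2.
Proof.
  intros Hw; pose proof PI_upper_bound; pose proof PI_pow8_lower_bound.
  assert (sin (2*w) <= PI - 2*w) by (rewrite <- (sin_PI_x (2*w)); apply sin_le_x; lra).
  pose proof (sin_ge_cubic w ltac:(lra)).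
  assert (0 <= w - w^3/6) by nra.
  assert ((w - w^3/6)^2 <= sin w ^ 2) by (apply pow_incr; lra).
  assert (0 <= w^5) by (apply pow_le; lra).
  assert (Hpoly : 192 * (945/100 - 4*w) * w^3 <= 9000 * (1 - w^2/6)^2) by nra.
  apply Rle_trans with (192 * (945/100 - 4*w) * w^5).
  { apply Rmult_le_compat_r; lra. }
  apply Rle_trans with (w^2 * (9000 * (1 - w^2/6)^2)).
  { replace (192 * (945/100 - 4*w) * w^5) with (w^2 * (192 * (945/100 - 4*w) * w^3)) by ring.
    apply Rmult_le_compat_l; nra. }
  replace (w^2 * (9000 * (1 - w^2/6)^2)) with (9000 * (w - w^3/6)^2) by field.
  apply Rmult_le_compat; nra.
Qed.

(* On [a, b]: [sin w >= sin_lb a], [cos w <= PI/2 - w], [PI - w <= 3.15 - a] and [w^5 <= b^5];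
   the last two hypotheses are numerical checks of the resulting constant inequality. *)
Lemma sin_add_mul_cos_le_pole_on (a b w : R) : 0 < a -> a <= w <= b -> w < PI/2 ->
  768 * (1 + (315/100 - a) * (1575/1000 - a)) * b^5
    <= 9200 * (a - a^3/6 + a^5/120 - a^7/5040)^2 ->
  0 <= a - a^3/6 + a^5/120 - a^7/5040 ->
  768 * (sin w + (PI - w) * cos w) * w^5 <= PI^8 * sin w ^ 2.
Proof.
  intros Ha Hw Hw2 Hnum Hpos.
  pose proof PI_upper_bound; pose proof PI_RGT_0; pose proof PI_pow8_lower_bound.
  pose proof (sin_le_x (PI/2 - w) ltac:(lra)) as Hcos; rewrite sin_shift in Hcos.
  pose proof (cos_ge_0 w ltac:(lra) ltac:(lra)).
  pose proof (proj2 (SIN_bound w)).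
  pose proof (proj1 (SIN a ltac:(lra) ltac:(lra))) as Hsin; rewrite sin_lb_eq in Hsin.
  pose proof (sin_incr_1 a w ltac:(lra) ltac:(lra) ltac:(lra) ltac:(lra) ltac:(lra)).
  assert ((PI - w) * cos w <= (315/100 - a) * (1575/1000 - a)) by (apply Rmult_le_compat; lra).
  assert (w^5 <= b^5) by (apply pow_incr; lra).
  assert (0 <= w^5) by (apply pow_le; lra).
  apply Rle_trans with (768 * (1 + (315/100 - a) * (1575/1000 - a)) * b^5).
  { apply Rmult_le_compat; nra. }
  apply Rle_trans with (9200 * (a - a^3/6 + a^5/120 - a^7/5040)^2); [exact Hnum |].
  apply Rmult_le_compat; [lra | nra | lra | apply pow_incr; lra].
Qed.

Lemma sin_add_mul_cos_le_pole (w : R) : 0 < w < PI/2 ->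
  768 * (sin w + (PI - w) * cos w) * w^5 <= PI^8 * sin w ^ 2.
Proof.
  intros Hw; pose proof PI_upper_bound; pose proof PI_RGT_0; pose proof PI_pow8_lower_bound.
  destruct (Rle_lt_dec w (108/100)) as [Hsmall | Hlarge].
  - pose proof (sin_le_x (PI/2 - w) ltac:(lra)) as Hcos; rewrite sin_shift in Hcos.
    pose proof (cos_ge_0 w ltac:(lra) ltac:(lra)).
    pose proof (proj2 (SIN_bound w)).
    pose proof (sin_ge_cubic w ltac:(lra)).
    assert ((PI - w) * cos w <= 315/100 * (1575/1000)) by (apply Rmult_le_compat; lra).
    assert (w^3 <= (108/100)^3) by (apply pow_incr; lra).
    assert (Hsin : w * (1 - (108/100)^2/6) <= sin w) by nra.
    assert (0 <= w * (1 - (108/100)^2/6)) by nra.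
    apply Rle_trans with (w^2 * (768 * (1 + 315/100 * (1575/1000)) * (108/100)^3)).
    { replace (768 * (sin w + (PI - w) * cos w) * w^5)
        with (w^2 * (768 * (sin w + (PI - w) * cos w) * w^3)) by ring.
      apply Rmult_le_compat_l; [nra |]; apply Rmult_le_compat; nra. }
    apply Rle_trans with (9200 * (w * (1 - (108/100)^2/6))^2).
    { replace (9200 * (w * (1 - (108/100)^2/6))^2)
        with (w^2 * (9200 * (1 - (108/100)^2/6)^2)) by ring.
      apply Rmult_le_compat_l; nra. }
    apply Rmult_le_compat; [lra | nra | lra | apply pow_incr; lra].
  - destruct (Rle_lt_dec w (134/100)).
    { apply (sin_add_mul_cos_le_pole_on (108/100) (134/100)); lra. }
    destruct (Rle_lt_dec w (151/100)).
    { apply (sin_add_mul_cos_le_pole_on (134/100) (151/100)); lra. }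
    apply (sin_add_mul_cos_le_pole_on (151/100) (1575/1000)); lra.
Qed.

Definition f_expr (v d : R) : R :=
  ((v + 1) * (d - sin d) + 2 * sqrt v * (2 * sin (d / 2) - d * cos (d / 2)))
  / (2 * (sin (d / 2)) ^ 2).

Lemma f_eq_f_expr (v d : R) : d <> 0 -> f v d = f_expr v d.
Proof. intros Hd; unfold f, f_expr; destruct (Req_EM_T d 0); [contradiction | reflexivity]. Qed.

Lemma f_expr_opp (v d : R) : f_expr v (- d) = - f_expr v d.
Proof.
  unfold f_expr; replace (- d / 2) with (- (d / 2)) by field.
  rewrite !sin_neg, cos_neg.
  replace ((- sin (d / 2)) ^ 2) with (sin (d / 2) ^ 2) by ring.
  unfold Rdiv; ring.
Qed.

Lemma f_expr_double (v t : R) : f_expr v (2 * t) =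
  ((v + 1) * (2*t - sin (2*t)) + sqrt v * (4 * (sin t - t * cos t))) / (2 * sin t ^ 2).
Proof. unfold f_expr; replace (2 * t / 2) with t by field; f_equal; ring. Qed.

Lemma f_expr_two_PI_sub (v w : R) : f_expr v (2*PI - 2*w) =
  ((v + 1) * (2*PI - 2*w + sin (2*w)) + sqrt v * (4 * (sin w + (PI - w) * cos w)))
  / (2 * sin w ^ 2).
Proof.
  unfold f_expr; replace ((2*PI - 2*w) / 2) with (PI - w) by field.
  replace (2*PI - 2*w) with (2 * (PI - w)) at 2 by ring.
  rewrite sin_2a, sin_PI_x, Rtrigo_facts.cos_pi_minus, sin_2a; f_equal; ring.
Qed.

Lemma weighted_le (v A B K : R) : 0 <= v -> A <= K -> B <= K ->
  (v + 1) * A + sqrt v * B <= (v + sqrt v + 1) * K.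
Proof. intros Hv HA HB; pose proof (sqrt_pos v); nra. Qed.

Lemma f_expr_le_linear (v d : R) : 0 <= v -> 0 < d <= PI ->
  f_expr v d <= PI^2 * (v + sqrt v + 1) * d / 12.
Proof.
  intros Hv Hd; pose proof PI_RGT_0.
  replace d with (2 * (d/2)) by field; set (t := d/2).
  assert (Ht : 0 < t <= PI/2) by (unfold t; lra).
  assert (0 < sin t) by (apply sin_gt_0; lra).
  pose proof (sub_sin_double_le_linear t Ht); pose proof (sin_sub_mul_cos_le_linear t Ht).
  rewrite f_expr_double; apply Rle_div_l; [nra |].
  replace (PI^2 * (v + sqrt v + 1) * (2*t) / 12 * (2 * sin t ^ 2))
    with ((v + sqrt v + 1) * (PI^2 * t * sin t ^ 2 / 3)) by field.
  apply weighted_le; lra.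
Qed.

Lemma f_expr_le_pole (v d : R) : 0 <= v -> PI < d < 2*PI ->
  f_expr v d <= PI^8 * (v + sqrt v + 1) / (12 * (2*PI - d)^5).
Proof.
  intros Hv Hd; pose proof PI_RGT_0.
  replace d with (2*PI - 2 * ((2*PI - d)/2)) by field; set (w := (2*PI - d)/2).
  assert (Hw : 0 < w < PI/2) by (unfold w; lra).
  assert (0 < sin w) by (apply sin_gt_0; lra).
  assert (0 < w^5) by (apply pow_lt; lra).
  pose proof (sub_sin_double_le_pole w Hw); pose proof (sin_add_mul_cos_le_pole w Hw).
  rewrite f_expr_two_PI_sub; apply Rle_div_l; [nra |].
  replace (PI^8 * (v + sqrt v + 1) / (12 * (2*PI - (2*PI - 2*w))^5) * (2 * sin w ^ 2))
    with ((v + sqrt v + 1) * (PI^8 * sin w ^ 2 / (192 * w^5))) by (field; lra).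
  apply weighted_le; [exact Hv | |]; apply (Rle_div_r _ _ (192 * w^5)); nra.
Qed.

Lemma f_expr_nonneg (v d : R) : 0 <= v -> 0 < d < 2*PI -> 0 <= f_expr v d.
Proof.
  intros Hv Hd; pose proof (sqrt_pos v).
  replace d with (2 * (d/2)) by field; set (t := d/2).
  assert (Ht : 0 < t < PI) by (unfold t; lra).
  assert (0 < sin t) by (apply sin_gt_0; lra).
  pose proof (sin_le_x (2*t) ltac:(lra)); pose proof (mul_cos_le_sin t Ht).
  rewrite f_expr_double; apply Rdiv_le_0_compat; [| nra].
  apply Rplus_le_le_0_compat; apply Rmult_le_pos; lra.
Qed.

Lemma f_expr_ge_near_two_PI (v w : R) : 0 <= v -> 0 < w < PI/2 ->
  (PI - w) / w^2 <= f_expr v (2*PI - 2*w).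
Proof.
  intros Hv Hw; pose proof (sqrt_pos v).
  assert (0 < sin w) by (apply sin_gt_0; lra).
  pose proof (sin_le_x w ltac:(lra)).
  pose proof (sin_ge_0 (2*w) ltac:(lra) ltac:(lra)).
  pose proof (cos_ge_0 w ltac:(lra) ltac:(lra)).
  rewrite f_expr_two_PI_sub; apply (Rle_div_r _ _ (2 * sin w ^ 2)); [nra |].
  apply Rle_trans with (2 * (PI - w)).
  - replace ((PI - w) / w^2 * (2 * sin w ^ 2)) with (2 * (PI - w) * (sin w ^ 2 / w^2))
      by (field; lra).
    assert (sin w ^ 2 / w^2 <= 1).
    { apply Rle_div_l; [nra |]; rewrite Rmult_1_l; apply pow_incr; lra. }
    pose proof PI_RGT_0; nra.
  - assert (0 <= sqrt v * (4 * (sin w + (PI - w) * cos w))) by (apply Rmult_le_pos; nra).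
    nra.
Qed.

Lemma f_expr_continuous (v a : R) : 0 < a < 2*PI -> continuity_pt (f_expr v) a.
Proof.
  intros Ha; apply continuity_pt_filterlim.
  apply (ex_derive_continuous (K := R_AbsRing) (V := R_NormedModule)).
  unfold f_expr; auto_derive.
  assert (0 < sin (a */ 2)) by (apply sin_gt_0; lra); nra.
Qed.

Lemma f_expr_attains (x v : R) : 0 < x -> 0 <= v -> exists d, 0 < d < 2*PI /\ f_expr v d = x.
Proof.
  intros Hx Hv; pose proof (sqrt_pos v); pose proof PI_lower_bound; pose proof PI_sqr_lower_bound.
  set (c := PI^2 * (v + sqrt v + 1)).
  assert (Hc : 0 < c) by (unfold c; nra).
  set (d0 := x / (x + c)).
  assert (Hd0 : 0 < d0 < 1) by (unfold d0; split; [apply Rdiv_lt_0_compat | apply Rlt_div_l]; lra).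
  assert (Hlow : f_expr v d0 < x).
  { pose proof (f_expr_le_linear v d0 Hv ltac:(lra)).
    assert (d0 * (x + c) = x) by (unfold d0; field; lra).
    unfold c in *; nra. }
  set (w := / (x + 2)).
  assert (Hw : 0 < w <= 1/2).
  { unfold w; split; [apply Rinv_0_lt_compat; lra |].
    rewrite <- Rdiv_1_l; apply Rle_div_l; lra. }
  assert (Hhigh : x < f_expr v (2*PI - 2*w)).
  { eapply Rlt_le_trans; [| apply f_expr_ge_near_two_PI; [exact Hv | lra]].
    replace ((PI - w) / w^2) with ((PI - w) * (x + 2)^2) by (unfold w; field; lra).
    nra. }
  destruct (Ranalysis5.IVT_interv (fun d => f_expr v d - x) d0 (2*PI - 2*w))
    as [d [Hd Hfd]]; try lra.
  - intros a Ha; apply continuity_pt_minus; [apply f_expr_continuous; lra |].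
    apply continuity_pt_const; intros ? ?; reflexivity.
  - exists d; split; lra.
Qed.

Lemma delta_spec (x v : R) : 0 < x -> 0 <= v ->
  -2*PI < delta x v < 2*PI /\ f v (delta x v) = x.
Proof.
  intros Hx Hv; unfold delta; apply epsilon_spec.
  destruct (f_expr_attains x v Hx Hv) as [d [Hd Hfd]].
  exists d; split; [lra |]; rewrite f_eq_f_expr; lra.
Qed.

Lemma f_nonpos (v d : R) : 0 <= v -> -2*PI < d <= 0 -> f v d <= 0.
Proof.
  intros Hv Hd; destruct (Req_dec d 0) as [-> | Hd0].
  - unfold f; destruct (Req_EM_T 0 0); [lra | congruence].
  - rewrite f_eq_f_expr by exact Hd0; replace d with (- - d) by ring; rewrite f_expr_opp.
    pose proof (f_expr_nonneg v (- d) Hv ltac:(lra)); lra.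
Qed.

Lemma lt_pow5_of_Rpower_lt (y u : R) : 0 < y -> Rpower y (1/5) < u -> y < u^5.
Proof.
  intros Hy Hu.
  assert (Hr : 0 < Rpower y (1/5)) by apply exp_pos.
  rewrite <- (Rpower_pow 5 u) by lra.
  replace y with (Rpower (Rpower y (1/5)) (INR 5)) at 1.
  - apply Rlt_Rpower_l; [simpl; lra | lra].
  - rewrite Rpower_mult; replace (1/5 * INR 5) with 1 by (simpl; field); now apply Rpower_1.
Qed.

Lemma f_lt_of_linear_lt (x v d : R) : 0 <= v -> 0 < d <= PI ->
  PI^2 * (v + sqrt v + 1) * d < 12 * x -> f v d < x.
Proof.
  intros Hv Hd Hlt; rewrite f_eq_f_expr by lra.
  pose proof (f_expr_le_linear v d Hv Hd); lra.
Qed.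

Lemma f_lt_of_root_lt (x v d : R) : 0 < x -> 0 <= v -> PI < d < 2*PI ->
  Rpower (PI^8 * (v + sqrt v + 1) / (12 * x)) (1/5) < 2*PI - d -> f v d < x.
Proof.
  intros Hx Hv Hd Hlt; pose proof (sqrt_pos v); pose proof PI_RGT_0.
  rewrite f_eq_f_expr by lra.
  assert (Hy : 0 < PI^8 * (v + sqrt v + 1) / (12 * x)).
  { apply Rdiv_lt_0_compat; [apply Rmult_lt_0_compat; [apply pow_lt |] |]; lra. }
  apply lt_pow5_of_Rpower_lt in Hlt; [| exact Hy].
  assert (0 < (2*PI - d)^5) by (apply pow_lt; lra).
  eapply Rle_lt_trans; [apply f_expr_le_pole; assumption |].
  apply Rlt_div_l; [lra |]; apply (Rlt_div_l _ _ (12 * x)) in Hlt; lra.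
Qed.

Lemma f_lt_of_lt_h (x v d : R) : 0 < x -> 0 <= v -> -2*PI < d < 2*PI ->
  d < h x v -> f v d < x.
Proof.
  intros Hx Hv Hd Hlt; pose proof (sqrt_pos v); pose proof PI_RGT_0.
  destruct (Rle_lt_dec d 0) as [Hneg | Hpos]; [pose proof (f_nonpos v d Hv ltac:(lra)); lra |].
  assert (Hc : 0 < PI^2 * (v + sqrt v + 1)) by (apply Rmult_lt_0_compat; [apply pow_lt |]; lra).
  unfold h in Hlt; destruct (Rle_dec x (PI^3 / 12 * (v + sqrt v + 1))) as [Hsmall | Hlarge].
  - apply Rlt_div_r in Hlt; [| lra].
    apply f_lt_of_linear_lt; [exact Hv | split; [exact Hpos |] | lra].
    nra.
  - destruct (Rle_lt_dec d PI) as [Hle | Hgt].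
    + apply f_lt_of_linear_lt; [exact Hv | lra |]; nra.
    + apply f_lt_of_root_lt; lra.
Qed.

Theorem lemma2p4 (x v : R) (hx : 0 < x) (hv : 0 <= v) :
  h x v <= delta x v.
Proof.
  destruct (delta_spec x v hx hv) as [Hrange Hf].
  apply Rnot_lt_le; intros Hlt.
  pose proof (f_lt_of_lt_h x v (delta x v) hx hv Hrange Hlt); lra.
Qed.
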